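(* Let $j\ge 1$, $\lambda\ge 1$, $s\ge 0$ be integers and let $w=w_{j,s,\lambda}$ be the leaf weight sequence defined in the context. Let $g=g_{j,s,\lambda}$ be the sequence defined by $g(n)=w(n)$ for $1\le n\le 3+2s+\lambda j$ and \[ g(n)=g\bigl(n-s-g(n-j)\bigr)+\lambda j\qquad (n>3+2s+\lambda j). \] Then this recursion is well defined for all positive integers $n$ (every argument $n-s-g(n-j)$ lies in $\{1,\dots,n-1\}$), and $g(n)=w(n)$ for every positive integer $n$.
   Context: Fix integers $j\ge1$, $\lambda\ge1$, $s\ge0$. Define a labeled infinite rooted tree $\mathcal K$ as follows. It has ''supernodes'' $S_0,S_1,S_2,\dots$ with an edge between $S_i$ and $S_{i+1}$ for every $i\ge0$ ($S_0$ is the root). $S_0$ has two further children: the ''initial leaf'' and a node $N_0$, which is a leaf. For each $i\ge1$, $S_i$ has a child $N_i$ (the ''knot node''), and attached to $N_i$ are $\lambda$ chains, each a path of $i\cdot j$ nodes hanging from $N_i$; the last (bottom) node of each chain is a leaf. Each supernode carries $s$ labels and every other node carries exactly one label. The labels are the consecutive positive integers $1,2,3,\dots$, assigned in the following order: initial leaf, $S_0$, $N_0$; then for $i=1,2,3,\dots$: $S_i$ (its $s$ labels), $N_i$, then the nodes of the first chain of $N_i$ from top to bottom, then the second chain, ..., then the $\lambda$-th chain. The initial leaf has weight $1$; every other leaf of $\mathcal K$ (namely $N_0$ and the bottom node of each chain) has weight $j$. The leaf weight sequence $w(n)=w_{j,s,\lambda}(n)$ ($n\ge1$) is the total weight of the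 leaves of $\mathcal K$ whose label is $\le n$. Explicitly, $w(n)=1+j\cdot\#\{\ell\in L:\ell\le n\}$, where $L$ consists of the number $s+2$ together with the numbers $L_{i,c}=s+2+\sum_{l=1}^{i-1}(s+1+\lambda l j)+s+1+c\,i\,j$ for $i\ge1$, $1\le c\le\lambda$. *)

From mathcomp Require Import all_boot.
Set Implicit Arguments. Unset Strict Implicit. Unset Printing Implicit Defensive.

Definition Lic (j s lam i c : nat) : nat :=
  s + 2 + \sum_(1 <= l < i) (s + 1 + lam * l * j) + s + 1 + c * i * j.

(* membership in the set L = {s+2} U {L_{i,c} : i >= 1, 1 <= c <= lambda}.
   Since L_{i,c} >= i, it suffices to search i <= ell. *)
Definition inL (j s lam ell : nat) : bool :=
  (ell == s + 2) ||
  [exists i : 'I_ell.+1, exists c : 'I_lam.+1,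
     [&& 1 <= i, 1 <= c & Lic j s lam i c == ell]].

(* w(n) = 1 + j * #{ell in L : ell <= n}   (elements of L are positive) *)
Definition w (j s lam n : nat) : nat :=
  1 + j * \sum_(1 <= ell < n.+1) inL j s lam ell.

Definition Nthr (j s lam : nat) : nat := 3 + 2 * s + lam * j.

(* g computed with fuel; the (never intended to be used) default 0 is
   returned if a recursive argument falls outside {1,...,n-1}. *)
Fixpoint gaux (j s lam fuel n : nat) : nat :=
  match fuel with
  | 0 => 0
  | f.+1 =>
    if n <= Nthr j s lam then w j s lam n
    else let m := n - s - gaux j s lam f (n - j) in
         if (1 <= m) && (m <= n - 1) then gaux j s lam f m + lam * j else 0
  end.

Definition g (j s lam n : nat) : nat := gaux j s lam n n.

From mathcomp Require Import all_boot zify.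
Set Implicit Arguments. Unset Strict Implicit. Unset Printing Implicit Defensive.

(* Enumerate the weighted leaves of the tree K (other than the
   initial leaf) in increasing label order: leaf 0 = s+2 is N_0, and leaf t.+1
   is the ((t mod lam)+1)-th chain leaf of the knot N_((t div lam)+1).  Then
   w n = 1 + j * #{t | leaf t <= n}, and the whole structure of K is encoded in
   the recurrence
       leaf (t + lam) = leaf t + s + 1 + j * (t + lam),
   from which the gaps satisfy leaf t.+1 - leaf t >= j, and >= 2j once t >= lam.
   If leaf T <= n < leaf T.+1 with T >= lam (which holds when n > Nthr), then
   n - j lies in the window of leaf T or leaf T.-1, and in both cases the
   recurrence places m = n - s - w (n - j) in the window of leaf (T - lam);
   hence w n = w m + lam * j, with 1 <= m < n. *)

Section CountingEnumeratedSet.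

Variables (P : pred nat) (a : nat -> nat).
Hypothesis a_incr : forall t, a t < a t.+1.
Hypothesis a0_gt0 : 0 < a 0.
Hypothesis P_enum : forall l, P l <-> exists t, a t = l.

Definition count_upto n := \sum_(1 <= l < n.+1) P l.

Lemma enum_mono : {mono a : t u / t < u}.
Proof. exact/leqW_mono/leq_mono/(homo_ltn ltn_trans a_incr). Qed.

Lemma not_P_between t l : a t < l < a t.+1 -> ~~ P l.
Proof.
case/andP=> lo hi; apply/negP => /P_enum [u eu].
by move: lo hi; rewrite -eu !enum_mono; lia.
Qed.

Lemma not_P_below l : l < a 0 -> ~~ P l.
Proof. by move=> lo; apply/negP => /P_enum [u eu]; move: lo; rewrite -eu enum_mono. Qed.

Lemma count_upto_const m n : m <= n ->
  (forall l, m < l <= n -> ~~ P l) -> count_upto n = count_upto m.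
Proof.
move=> le_mn noP; rewrite /count_upto (@big_cat_nat _ _ _ m.+1) //=.
rewrite [X in _ + X]big_nat_cond [X in _ + X]big1 ?addn0 //.
by move=> l /andP[/andP[lo hi] _]; rewrite (negbTE (noP l _)) // lo.
Qed.

Lemma count_upto_next m l : m < l -> P l ->
  (forall x, m < x < l -> ~~ P x) -> count_upto l = (count_upto m).+1.
Proof.
case: l => [//|l] lt_ml Pl noP.
by rewrite /count_upto big_nat_recr //= -/(count_upto l) Pl addn1 (@count_upto_const m l).
Qed.

Lemma count_upto_enum t : count_upto (a t) = t.+1.
Proof.
elim: t => [|t IH].
  rewrite (@count_upto_next 0) ?P_enum; [|by []|by exists 0|].
    by rewrite /count_upto big_geq.
  by move=> x /andP[_ hx]; apply: not_P_below.
rewrite (@count_upto_next (a t)) ?IH ?a_incr //; first by rewrite P_enum; exists t.+1.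
by move=> x hx; apply: (not_P_between hx).
Qed.

Lemma count_upto_window t n : a t <= n < a t.+1 -> count_upto n = t.+1.
Proof.
case/andP=> lo hi; rewrite (@count_upto_const (a t)) ?count_upto_enum //.
by move=> l /andP[lo' hi']; apply: (@not_P_between t); rewrite lo'; lia.
Qed.

Lemma exists_window n : a 0 <= n -> exists t, a t <= n < a t.+1.
Proof.
elim: n => [|n IH]; first by lia.
rewrite leq_eqVlt => /orP[/eqP <-|lt0n]; first by exists 0; rewrite leqnn a_incr.
have [t /andP[lo hi]] := IH lt0n.
case: (ltnP n.+1 (a t.+1)) => hi'; first by exists t; rewrite hi' andbT; lia.
by exists t.+1; have := a_incr t.+1; lia.
Qed.

End CountingEnumeratedSet.

Section LeafSequence.

Variables j s lam : nat.
Hypotheses (hj : 1 <= j) (hlam : 1 <= lam).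

(* The weighted leaves of K other than the initial leaf, in increasing order. *)
Definition leaf t :=
  if t is u.+1 then Lic j s lam (u %/ lam).+1 (u %% lam).+1 else s + 2.

Lemma Lic1 c : Lic j s lam 1 c = 2 * s + 3 + c * j.
Proof. by rewrite /Lic big_geq // muln1; lia. Qed.

(* Passing from knot i to knot i+1 adds the supernode, knot and chains of knot i. *)
Lemma LicS i c : 0 < i ->
  Lic j s lam i.+1 c = Lic j s lam i c + s.+1 + j * (lam * i + c).
Proof. by move=> i_gt0; rewrite /Lic big_nat_recr //=; nia. Qed.

Lemma leaf_first t : t < lam -> leaf t.+1 = Lic j s lam 1 t.+1.
Proof. by move=> lt_t; rewrite /= divn_small ?modn_small. Qed.

Lemma leaf_rec t : leaf (t + lam) = leaf t + s.+1 + j * (t + lam).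
Proof.
case: t => [|u].
  by rewrite add0n -{1}(prednK hlam) leaf_first ?prednK ?Lic1 //=; nia.
rewrite addSn /= (divnDr _ (dvdnn lam)) divnn hlam modnDr addn1 LicS //.
congr (_ + _); congr (_ * _).
by rewrite {3}(divn_eq u lam) mulnS; lia.
Qed.

Lemma leaf_gap t : leaf t + j <= leaf t.+1.
Proof.
elim/ltn_ind: t => t IH; case: (ltnP t lam) => [lt_t|le_t].
  case: t IH lt_t => [|u] _ lt_u; first by rewrite leaf_first // Lic1 /=; lia.
  by rewrite !leaf_first ?Lic1; [nia|lia|lia].
rewrite -(subnK le_t) -addSn !leaf_rec.
by have := IH (t - lam) ltac:(lia); lia.
Qed.

Lemma leaf_gap2 t : lam <= t -> leaf t + 2 * j <= leaf t.+1.
Proof.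
move=> le_t; rewrite -(subnK le_t) -addSn !leaf_rec.
by have := leaf_gap (t - lam); lia.
Qed.

Lemma leaf_incr t : leaf t < leaf t.+1.
Proof. by have := leaf_gap t; lia. Qed.

Lemma leaf_gt0 t : 0 < leaf t.
Proof. by case: t => [|u]; [rewrite /= addn2 | exact: leq_ltn_trans (leaf_incr u)]. Qed.

(* The threshold Nthr is the label of the last leaf of the first knot. *)
Lemma leaf_lam : leaf lam = Nthr j s lam.
Proof. by rewrite -(add0n lam) leaf_rec /Nthr /=; lia. Qed.

Lemma inL_leaf l : inL j s lam l <-> exists t, leaf t = l.
Proof.
split.
  case/orP=> [/eqP ->|/existsP [i /existsP [c /and3P[i_gt0 c_gt0 /eqP <-]]]].
    by exists 0.
  exists (lam * i.-1 + c.-1).+1; rewrite /= mulnC divnMDl // modnMDl.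
  have lt_c : c.-1 < lam by have := ltn_ord c; lia.
  by rewrite divn_small // modn_small // addn0 !prednK.
case=> [[|u] <-]; first by rewrite /inL eqxx.
apply/orP; right; apply/existsP.
have le_iL : (u %/ lam).+1 < (leaf u.+1).+1 by rewrite ltnS /= /Lic; nia.
have lt_c : (u %% lam).+1 < lam.+1 by rewrite ltnS ltn_pmod.
by exists (Ordinal le_iL); apply/existsP; exists (Ordinal lt_c); rewrite /= eqxx.
Qed.

Let nleaves := count_upto (inL j s lam).

Lemma w_nleaves n : w j s lam n = 1 + j * nleaves n.
Proof. by []. Qed.

Lemma nleaves_window t n : leaf t <= n < leaf t.+1 -> nleaves n = t.+1.
Proof. exact: (count_upto_window leaf_incr (leaf_gt0 0) inL_leaf). Qed.

Lemma w_recursion n : Nthr j s lam < n ->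
  let m := n - s - w j s lam (n - j) in
  1 <= m <= n - 1 /\ w j s lam n = w j s lam m + lam * j.
Proof.
move=> lt_Nn m.
have [T /andP[loT hiT]] : exists T, leaf T <= n < leaf T.+1.
  by apply: (exists_window leaf_incr (leaf_gt0 0)); move: lt_Nn; rewrite /Nthr /=; lia.
have le_lam_T : lam <= T by rewrite -ltnS -(enum_mono leaf_incr) leaf_lam; lia.
pose t := T - lam.
have eT : t + lam = T := subnK le_lam_T.
have recT := leaf_rec t; have recT1 := leaf_rec t.+1.
rewrite addSn eT mulnS in recT1; rewrite eT in recT.
have window_m : leaf t <= m < leaf t.+1.
  rewrite /m w_nleaves; case: (leqP (leaf T + j) n) => [le_n|lt_n].
    by rewrite (@nleaves_window T) ?mulnS; lia.
  have gapT := leaf_gap2 le_lam_T; have gapT' := leaf_gap T.-1.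
  have T_gt0 : 0 < T by lia.
  by rewrite prednK // in gapT'; rewrite (@nleaves_window T.-1) prednK //; lia.
split.
  by have := leaf_gt0 t; move: window_m; rewrite /m w_nleaves; lia.
rewrite !w_nleaves (@nleaves_window T) ?loT // (nleaves_window window_m).
by rewrite -eT; nia.
Qed.

End LeafSequence.

Lemma gaux_eq_w j s lam f n : 1 <= j -> 1 <= lam -> 1 <= n <= f ->
  gaux j s lam f n = w j s lam n.
Proof.
move=> hj hlam; elim: f n => [|f IH] n /andP[n_gt0 le_nf] /=; first by lia.
case: ifP => [//|/negbT]; rewrite -ltnNge => lt_Nn.
have le_jN : j + 3 <= Nthr j s lam by rewrite /Nthr; nia.
have [/andP[m_gt0 lt_mn] ->] := w_recursion hj hlam lt_Nn.
rewrite (IH (n - j)); last by lia.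
by rewrite m_gt0 lt_mn /= IH // m_gt0 /=; lia.
Qed.

Theorem theorem2p1 (j lam s : nat) (hj : 1 <= j) (hlam : 1 <= lam) :
  (forall n, Nthr j s lam < n ->
     1 <= n - s - g j s lam (n - j) <= n - 1) /\
  (forall n, 1 <= n -> g j s lam n = w j s lam n).
Proof.
have g_eq_w n : 1 <= n -> g j s lam n = w j s lam n.
  by move=> n_gt0; rewrite /g gaux_eq_w // n_gt0 /=.
split=> // n lt_Nn.
have le_jN : j + 3 <= Nthr j s lam by rewrite /Nthr; nia.
have [range_m _] := w_recursion hj hlam lt_Nn.
by rewrite g_eq_w //; lia.
Qed.
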